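(* Let $I\subseteq\mathbb K[x_1,\dots,x_n]$ be an $\mathfrak m$-primary monomial ideal generated in a single degree $d$ (so $\mu_i=x_i^d\in G(I)$ for all $i$), and let $J=\langle\mu_1,\dots,\mu_n\rangle$. The following are equivalent: (1) $I$ is Freiman, i.e. $|G(I^2)|=n|G(I)|-\binom n2$; (2) $I$ is very good; (3) $I^2=IJ$.
   Context: Let $\mathbb K$ be a field, $R=\mathbb K[x_1,\dots,x_n]$, $\mathfrak m=\langle x_1,\dots,x_n\rangle$, $\mathbb N=\{0,1,2,\dots\}$. A monomial $x_1^{\alpha_1}\cdots x_n^{\alpha_n}$ is identified with the point $(\alpha_1,\dots,\alpha_n)\in\mathbb N^n$. For a monomial ideal $I$, $G(I)$ denotes its (unique) minimal monomial generating set. An equigenerated monomial ideal $I$ with analytic spread $l(I)$ is called Freiman if $|G(I^2)|=l(I)|G(I)|-\binom{l(I)}{2}$; for $\mathfrak m$-primary $I$, $l(I)=n$. If $I$ is an $\mathfrak m$-primary monomial ideal, then for each $i$ there is a unique $d_i\ge1$ with $x_i^{d_i}\in G(I)$; write $\mu_i=x_i^{d_i}$. For $(a_1,\dots,a_n)\in\mathbb N^n$ the box associated to $I$ is $B_{a_1,\dots,a_n}=([a_1d_1,(a_1+1)d_1]\times\cdots\times[a_nd_n,(a_n+1)d_n])\cap\mathbb N^n$; a monomial belongs to a box if its exponent vector does. An $\mathfrak m$-primary monomial ideal $I$ is called good if for every integer $l\ge1$, every element of $G(I^l)$ belongs to some box $B_{a_1,\dots,a_n}$ with $a_1+\dots+a_n=l-1$.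 For a good ideal $I$ and $a\in\mathbb N^n$, with $l=a_1+\dots+a_n+1$, define $I_{a}=\left\langle \frac{m}{\mu_1^{a_1}\cdots\mu_n^{a_n}} : m\in B_{a}\cap G(I^l)\right\rangle$. A good ideal $I$ is called very good if $I_{a}=I$ for all $a\in\mathbb N^n$. *)

(* Monomial ideals of K[x_1..x_n] are modelled
   combinatorially: a monomial is its exponent vector in N^n, a monomial
   ideal is given by a finite generating list of monomials. *)
From HB Require Import structures.
From mathcomp Require Import all_boot.
Set Implicit Arguments. Unset Strict Implicit. Unset Printing Implicit Defensive.

Definition mono (n : nat) := {ffun 'I_n -> nat}.

Definition mzero n : mono n := [ffun _ => 0].
Definition madd n (m m' : mono n) : mono n := [ffun i => m i + m' i].
Definition upow n (i : 'I_n) (k : nat) : mono n := [ffun j => if j == i then k else 0].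
Definition mdeg n (m : mono n) : nat := \sum_(i < n) m i.
Definition mdiv n (g m : mono n) : bool := [forall i, g i <= m i].

Definition in_ideal n (S : seq (mono n)) (m : mono n) : bool := has (fun g => mdiv g m) S.

Definition ideal_eq n (S T : seq (mono n)) : Prop := forall m, in_ideal S m = in_ideal T m.

Definition mingens n (S : seq (mono n)) : seq (mono n) :=
  undup [seq m <- S | ~~ has (fun g => mdiv g m && (g != m)) S].

Definition prodgens n (S T : seq (mono n)) : seq (mono n) :=
  [seq madd s t | s <- S, t <- T].

Definition powgens n (S : seq (mono n)) (l : nat) : seq (mono n) :=
  iter l (prodgens S) [:: mzero n].

Definition mprimary n (S : seq (mono n)) : Prop :=
  ~~ in_ideal S (mzero n) /\ forall i : 'I_n, exists k, in_ideal S (upow i k).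

Definition equigen n (S : seq (mono n)) (d : nat) : Prop :=
  forall g, g \in mingens S -> mdeg g = d.

(* Freiman for an m-primary ideal (l(I) = n):
   |G(I^2)| = n |G(I)| - binom(n,2), written without truncated subtraction *)
Definition freiman_mprimary n (S : seq (mono n)) : Prop :=
  size (mingens (powgens S 2)) + 'C(n, 2) = n * size (mingens S).

Definition in_box n (dv : 'I_n -> nat) (a m : mono n) : bool :=
  [forall i, (a i * dv i <= m i) && (m i <= (a i).+1 * dv i)].

Definition asum n (a : mono n) : nat := \sum_(i < n) a i.

Definition pure_exps n (S : seq (mono n)) (dv : 'I_n -> nat) : Prop :=
  forall i, upow i (dv i) \in mingens S.

Definition good_wrt n (S : seq (mono n)) (dv : 'I_n -> nat) : Prop :=
  forall l, 1 <= l -> forall m, m \in mingens (powgens S l) ->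
    exists a : mono n, asum a = l.-1 /\ in_box dv a m.

Definition good n (S : seq (mono n)) : Prop :=
  exists dv, pure_exps S dv /\ good_wrt S dv.

Definition mdivide_box n (dv : 'I_n -> nat) (a m : mono n) : mono n :=
  [ffun i => m i - a i * dv i].

Definition Ia_gens n (S : seq (mono n)) (dv : 'I_n -> nat) (a : mono n) : seq (mono n) :=
  [seq mdivide_box dv a m | m <- mingens (powgens S (asum a).+1) & in_box dv a m].

Definition very_good n (S : seq (mono n)) : Prop :=
  exists dv, pure_exps S dv /\ good_wrt S dv /\
    forall a : mono n, ideal_eq (Ia_gens S dv a) S.

Definition Jgens n (d : nat) : seq (mono n) := [seq upow i d | i <- enum 'I_n].

(* All three conditions are shown equivalent to the
   EXCHANGE PROPERTY
       (E)  for all g, h in G there are g' in G and i with g h = g' mu_i.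
   Since I is equigenerated, G(I^l) consists exactly of the products of l
   elements of G, i.e. of the elements of I^l of degree l d.
   - (I^2 = IJ) <-> (E): a product g h of degree 2d lies in IJ iff it is
     divisible by, hence equal to, some g' mu_i.
   - Freiman <-> (E): the products g mu_i form a subset Q of G(I^2); the only
     coincidences among them are mu_j mu_i = mu_i mu_j, so |Q| = n|G| - C(n,2),
     and |G(I^2)| = |Q| iff G(I^2) = Q iff (E).
   - very good <-> (E): the box decomposition of g h in G(I^2) writes it as
     x mu_i with x in I_a = I of degree d.  Conversely, iterating (E) writes
     every element of G(I^l) as g mu^b with g in G and |b| = l - 1, which puts
     it in the box B_b and makes the box quotients minimal generators of I. *)
From mathcomp Require Import all_boot zify.
Set Implicit Arguments. Unset Strict Implicit. Unset Printing Implicit Defensive.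

Section Monomials.
Variable n : nat.
Implicit Types (m g h : mono n) (S : seq (mono n)).

Lemma maddC m g : madd m g = madd g m.
Proof. by apply/ffunP=> i; rewrite !ffunE addnC. Qed.

Lemma madd0 m : madd m (mzero n) = m.
Proof. by apply/ffunP=> i; rewrite !ffunE addn0. Qed.

Lemma mdeg_add m g : mdeg (madd m g) = mdeg m + mdeg g.
Proof. by rewrite /mdeg -big_split /=; apply: eq_bigr=> i _; rewrite ffunE. Qed.

Lemma mdeg_coord m (i : 'I_n) : m i <= mdeg m.
Proof. by rewrite /mdeg (bigD1 i) //= leq_addr. Qed.

Lemma mdeg_upow (i : 'I_n) k : mdeg (upow i k) = k.
Proof.
rewrite /mdeg (bigD1 i) //= big1 ?ffunE ?eqxx ?addn0 // => j /negPf ji.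
by rewrite ffunE ji.
Qed.

Lemma mdivP g m : reflect (forall i, g i <= m i) (mdiv g m).
Proof. exact: forallP. Qed.

Lemma mdiv_refl m : mdiv m m.
Proof. by apply/mdivP. Qed.

Lemma mdiv_trans g h m : mdiv g h -> mdiv h m -> mdiv g m.
Proof. by move=> /mdivP a /mdivP b; apply/mdivP=> i; apply: leq_trans (a i) (b i). Qed.

Lemma mdiv_add g h g' h' : mdiv g g' -> mdiv h h' -> mdiv (madd g h) (madd g' h').
Proof. by move=> /mdivP a /mdivP b; apply/mdivP=> i; rewrite !ffunE leq_add. Qed.

Lemma mdiv_deg g m : mdiv g m -> mdeg g <= mdeg m.
Proof. by move=> /mdivP a; apply: leq_sum=> i _. Qed.

Lemma mdiv_eq g m : mdiv g m -> mdeg m <= mdeg g -> g = m.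
Proof.
move=> /mdivP a le.
pose r : mono n := [ffun i => m i - g i].
have Em : m = madd g r by apply/ffunP=> i; rewrite !ffunE subnKC.
have : mdeg r == 0 by move: le; rewrite Em mdeg_add; lia.
rewrite /mdeg sum_nat_eq0 => /forallP r0.
apply/ffunP=> i; have := r0 i; rewrite /= ffunE subn_eq0 => mg.
by apply/eqP; rewrite eqn_leq a mg.
Qed.

Lemma mdiv_lt g m : mdiv g m -> g != m -> mdeg g < mdeg m.
Proof.
move=> dv ne; rewrite ltn_neqAle mdiv_deg // andbT.
by apply: contra ne=> /eqP e; apply/eqP/mdiv_eq=> //; rewrite e leqnn.
Qed.

Lemma mem_mingens S m : m \in mingens S =
  (m \in S) && ~~ has (fun g => mdiv g m && (g != m)) S.
Proof. by rewrite mem_undup mem_filter andbC. Qed.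

Lemma mingens_below S m : m \in S -> exists2 g, g \in mingens S & mdiv g m.
Proof.
move: {2}(mdeg m) (leqnn (mdeg m)) => k; elim: k m => [|k IH] m lek mS.
  exists m; last exact: mdiv_refl.
  rewrite mem_mingens mS /=; apply/hasPn=> g gS; apply/negP=> /andP[dv ne].
  by have := mdiv_lt dv ne; lia.
case Hm: (has (fun g => mdiv g m && (g != m)) S).
  move/hasP: Hm=> [g gS /andP[dv ne]].
  have [h hm dh] := IH g (ltnSE (leq_trans (mdiv_lt dv ne) lek)) gS.
  by exists h => //; apply: mdiv_trans dh dv.
by exists m; [rewrite mem_mingens mS Hm | apply: mdiv_refl].
Qed.

Lemma in_ideal_sub (X Y : seq (mono n)) m : (forall x, x \in X -> in_ideal Y x) ->
  in_ideal X m -> in_ideal Y m.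
Proof.
move=> XY /hasP [x xX dx]; have /hasP [y yY dy] := XY x xX.
by apply/hasP; exists y => //; apply: mdiv_trans dy dx.
Qed.

Lemma mem_prodgens (S T : seq (mono n)) s t :
  s \in S -> t \in T -> madd s t \in prodgens S T.
Proof. by move=> sS tT; apply/allpairsP; exists (s, t). Qed.

Lemma upow_inj d : 0 < d -> injective (fun i : 'I_n => upow i d).
Proof.
move=> d0 i j /ffunP /(_ i); rewrite !ffunE eqxx.
by case: eqP => // _ e; move: d0; rewrite e.
Qed.

Lemma asum1 (a : mono n) : asum a = 1 -> exists i, a = upow i 1.
Proof.
move=> a1.
have [i ai] : exists i, 0 < a i.
  apply/existsP; apply: contraT; rewrite negb_exists => /forallP a0.
  by move: a1; rewrite /asum big1 // => i _; have := a0 i; lia.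
exists i; move: a1; rewrite /asum (bigD1 i) //= => a1.
have ai1 : a i = 1 by lia.
move/eqP: a1; rewrite ai1 -{2}[1]addn0 eqn_add2l sum_nat_eq0 => /forallP a0.
apply/ffunP=> j; rewrite ffunE; case: eqP => [->|/eqP ne] //.
by apply/eqP; have := a0 j; rewrite ne.
Qed.

Lemma asum_bump (b c : mono n) (i : 'I_n) :
  (forall j, c j = b j + (j == i)) -> asum c = (asum b).+1.
Proof.
move=> Ec; rewrite /asum (eq_bigr (fun j => b j + (j == i))) // big_split /=.
rewrite [X in _ + X](bigD1 i) //= eqxx [X in _ + (_ + X)]big1 ?addn0 ?addn1 //.
by move=> j /negPf ->.
Qed.

Lemma asum_pos (b : mono n) : 0 < asum b -> exists i, 0 < b i.
Proof.
move=> b0; apply/existsP; apply: contraT; rewrite negb_exists => /forallP bi0.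
by move: b0; rewrite /asum big1 // => i _; have := bi0 i; lia.
Qed.

End Monomials.

Section IndexPairs.
Variable n : nat.

Lemma count_lt_iota (k N : nat) : k <= N -> count (fun x => x < k) (iota 0 N) = k.
Proof.
move=> kN; rewrite -(subnKC kN) iotaD count_cat add0n.
rewrite (eq_in_count (a2 := predT)); last by move=> x; rewrite mem_iota.
rewrite count_predT size_iota (eq_in_count (a2 := pred0)) ?count_pred0 ?addn0 //.
by move=> x; rewrite mem_iota /= => /andP [le _]; rewrite ltnNge le.
Qed.

Definition lt_pairs : seq ('I_n * 'I_n) :=
  [seq (j, i) | j : 'I_n <- enum 'I_n, i : 'I_n <- [seq i : 'I_n <- enum 'I_n | i < j]].

Lemma uniq_lt_pairs : uniq lt_pairs.
Proof.
apply: allpairs_uniq_dep; first exact: enum_uniq.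
  by move=> x _; apply: filter_uniq; apply: enum_uniq.
by move=> [x1 y1] [x2 y2] _ _ /= [-> ->].
Qed.

Lemma size_lt_pairs : size lt_pairs = 'C(n, 2).
Proof.
rewrite size_allpairs_dep (eq_map (g := fun j : 'I_n => val j)).
  by rewrite val_enum_ord sumnE -bin2_sum /index_iota subn0.
move=> j; rewrite size_filter -(count_map val (fun k => k < j)) val_enum_ord.
by apply: count_lt_iota; apply: ltnW.
Qed.

Lemma mem_lt_pairs (j i : 'I_n) : ((j, i) \in lt_pairs) = (i < j).
Proof.
apply/allpairsPdep/idP=> [[x [y [_ + [-> ->]]]]|lt].
  by rewrite mem_filter => /andP [].
by exists j, i; rewrite mem_enum mem_filter mem_enum lt.
Qed.

End IndexPairs.

Section EquigeneratedPrimary.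
Variables (n : nat) (S : seq (mono n)) (d : nat).
Hypotheses (n_gt0 : 0 < n) (Iprim : mprimary S) (Ieq : equigen S d).
Implicit Types (m g h : mono n).
Local Notation G := (mingens S).
Local Notation mu i := (upow i d).

Lemma deg_S_ge s : s \in S -> d <= mdeg s.
Proof.
move=> sS; have [g gG dv] := mingens_below sS.
by rewrite -(Ieq gG); apply: mdiv_deg.
Qed.

Lemma mem_G g : (g \in G) = (g \in S) && (mdeg g == d).
Proof.
apply/idP/andP=> [gG|[gS /eqP dg]].
  by move: (gG); rewrite mem_mingens => /andP[-> _]; rewrite (Ieq gG).
rewrite mem_mingens gS /=; apply/hasPn=> h hS; apply/negP=> /andP[dv ne].
by have := mdiv_lt dv ne; have := deg_S_ge hS; lia.
Qed.

Lemma G_sub g : g \in G -> g \in S.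
Proof. by rewrite mem_G => /andP[]. Qed.

Lemma deg_G g : g \in G -> mdeg g = d.
Proof. by rewrite mem_G => /andP[_ /eqP]. Qed.

Lemma G_coord_le g (i : 'I_n) : g \in G -> g i <= d.
Proof. by move=> gG; rewrite -(deg_G gG) mdeg_coord. Qed.

Lemma G_eq_mu g (i : 'I_n) : g \in G -> d <= g i -> g = mu i.
Proof.
move=> gG le; apply/esym/mdiv_eq; last by rewrite mdeg_upow deg_G.
by apply/mdivP=> j; rewrite ffunE; case: eqP => [->|].
Qed.

Lemma mu_in_G (i : 'I_n) : mu i \in G.
Proof.
have [k] := Iprim.2 i; case/hasP=> s sS dv.
have [g gG dg] := mingens_below sS.
have dgi := mdiv_trans dg dv.
suff -> : mu i = g by [].
apply/esym/G_eq_mu => //.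
have Eg : g = upow i (g i).
  apply/ffunP=> j; rewrite ffunE; case: eqP => [->|/eqP ne] //.
  by move/mdivP: dgi => /(_ j); rewrite ffunE (negPf ne); case: (g j).
by rewrite -(deg_G gG) Eg mdeg_upow ffunE eqxx.
Qed.

(* Properness of I forces d > 0 (here 0 < n is used). *)
Lemma d_gt0 : 0 < d.
Proof.
case: d Iprim (mu_in_G (Ordinal n_gt0)) => // [[I1 _]] muG; exfalso.
have E0 : upow (Ordinal n_gt0) 0 = mzero n by apply/ffunP=> j; rewrite !ffunE; case: eqP.
move: I1 muG; rewrite E0 => /negP I1 muG; apply: I1.
by apply/hasP; exists (mzero n); [exact: G_sub | exact: mdiv_refl].
Qed.

Lemma mu_inj : injective (fun i : 'I_n => mu i).
Proof. exact: upow_inj d_gt0. Qed.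

Lemma powgensS l : powgens S l.+1 = prodgens S (powgens S l).
Proof. by []. Qed.

Lemma deg_pow_ge l m : m \in powgens S l -> l * d <= mdeg m.
Proof.
elim: l m => [|l IH] m; first by rewrite mul0n.
rewrite powgensS => /allpairsP [[s t] [/= sS tP ->]].
by rewrite mdeg_add mulSn leq_add ?deg_S_ge ?IH.
Qed.

Lemma pow_below l m : m \in powgens S l ->
  exists m', [/\ m' \in powgens S l, mdeg m' = l * d & mdiv m' m].
Proof.
elim: l m => [|l IH] m.
  rewrite inE => /eqP ->; exists (mzero n); split; rewrite ?inE ?mul0n ?mdiv_refl //.
  by rewrite /mdeg big1 // => i _; rewrite ffunE.
rewrite powgensS => /allpairsP [[s t] [/= sS tP ->]].
have [g gG dg] := mingens_below sS.
have [t' [t'P dt' dvt]] := IH t tP.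
exists (madd g t'); split; [by apply: mem_prodgens; rewrite ?G_sub | | exact: mdiv_add].
by rewrite mdeg_add dt' deg_G // mulSn.
Qed.

Lemma mem_mingens_pow l m :
  (m \in mingens (powgens S l)) = (m \in powgens S l) && (mdeg m == l * d).
Proof.
apply/idP/andP=> [mP|[mP /eqP dm]].
  move: mP; rewrite mem_mingens => /andP[mP nh]; split=> //.
  have [m' [m'P dm' dv]] := pow_below mP.
  case: (eqVneq m' m) => [<-|ne]; first by rewrite dm'.
  by move/hasPn: nh => /(_ m' m'P); rewrite dv ne.
rewrite mem_mingens mP /=; apply/hasPn=> h hP; apply/negP=> /andP[dv ne].
by have := mdiv_lt dv ne; have := deg_pow_ge hP; lia.
Qed.

Lemma mem_pow2 m : m \in powgens S 2 -> exists s t, [/\ s \in S, t \in S & m = madd s t].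
Proof.
rewrite powgensS => /allpairsP [[s t'] [/= sS] /allpairsP [[t z] [/= tS]]].
by rewrite inE => /eqP -> -> ->; exists s, t; rewrite madd0.
Qed.

Lemma pow2_mem s t : s \in S -> t \in S -> madd s t \in powgens S 2.
Proof.
by move=> sS tS; rewrite -[t]madd0; apply: mem_prodgens => //; apply: mem_prodgens; rewrite ?inE.
Qed.

Lemma mem_mingens_pow2 x : reflect (exists g h, [/\ g \in G, h \in G & x = madd g h])
  (x \in mingens (powgens S 2)).
Proof.
rewrite mem_mingens_pow; apply: (iffP andP) => [[xP /eqP dx]|[g [h [gG hG ->]]]].
  have [s [t [sS tS Ex]]] := mem_pow2 xP.
  have ds := deg_S_ge sS; have dt := deg_S_ge tS.
  move: dx; rewrite Ex mdeg_add => dx.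
  by exists s, t; split=> //; rewrite mem_G ?sS ?tS /=; apply/eqP; lia.
split; first by apply: pow2_mem; apply: G_sub.
by rewrite mdeg_add !deg_G // mul2n addnn.
Qed.

Definition mupow (b : mono n) : mono n := [ffun i => b i * d].

Lemma mdeg_mupow b : mdeg (mupow b) = asum b * d.
Proof. by rewrite /mdeg /asum big_distrl; apply: eq_bigr => i _; rewrite ffunE. Qed.

Lemma G_mupow_in_pow g (b : mono n) l :
  g \in G -> asum b = l -> madd g (mupow b) \in powgens S l.+1.
Proof.
move=> gG; elim: l b => [|l IH] b bs.
  have -> : madd g (mupow b) = madd g (mzero n).
    apply/ffunP=> i; rewrite !ffunE.
    have : b i <= 0 by rewrite -bs; apply: mdeg_coord.
    by rewrite leqn0 => /eqP ->.
  by apply: mem_prodgens; [exact: G_sub | rewrite inE].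
have [i bi] : exists i, 0 < b i by apply: asum_pos; rewrite bs.
pose b' : mono n := [ffun j => b j - (j == i)].
have bs' : asum b' = l.
  apply/eqP; rewrite -eqSS -bs (asum_bump (b := b') (c := b) (i := i)) // => j.
  by rewrite ffunE; case: eqP => [->|] /=; [rewrite subn1 addn1 prednK | rewrite subn0 addn0].
have -> : madd g (mupow b) = madd (mu i) (madd g (mupow b')).
  apply/ffunP=> j; rewrite !ffunE; case: eqP => [->|_]; last by rewrite subn0.
  by rewrite mulnBl mul1n addnCA subnKC // leq_pmull.
by rewrite powgensS; apply: mem_prodgens; [apply/G_sub/mu_in_G | apply: IH].
Qed.

Lemma mu_in_J (i : 'I_n) : mu i \in Jgens n d.
Proof. by apply/mapP; exists i; rewrite ?mem_enum. Qed.

Definition exchange : Prop := forall g h, g \in G -> h \in G ->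
  exists g' i, g' \in G /\ madd g h = madd g' (mu i).

Lemma exchange_decomp l m : exchange -> m \in powgens S l.+1 -> mdeg m = l.+1 * d ->
  exists g b, [/\ g \in G, asum b = l & m = madd g (mupow b)].
Proof.
move=> ex; elim: l m => [|l IH] m.
  rewrite powgensS => /allpairsP [[s z] [/= sS]]; rewrite inE => /eqP -> -> dm.
  exists s, (mzero n); split.
  - by rewrite mem_G sS /= -(madd0 s) dm mul1n.
  - by rewrite /asum big1 // => i _; rewrite ffunE.
  - by apply/ffunP=> i; rewrite !ffunE.
rewrite powgensS => /allpairsP [[s t] [/= sS tP ->]] dm.
have ds := deg_S_ge sS; have dt := @deg_pow_ge l.+1 t tP.
move: dm; rewrite mdeg_add => dm.
have dt' : mdeg t = l.+1 * d by move: ds dt dm; rewrite !mulSn; lia.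
have sG : s \in G by rewrite mem_G sS; apply/eqP; move: ds dt dm; rewrite !mulSn; lia.
have [g [b [gG bs ->]]] := IH t tP dt'.
have [g' [i [g'G Egs]]] := ex s g sG gG.
exists g', [ffun j => b j + (j == i)]; split=> //.
  by rewrite (asum_bump (b := b) (i := i)) ?bs // => j; rewrite ffunE.
apply/ffunP=> j; move/ffunP: Egs => /(_ j); rewrite !ffunE => Egs.
rewrite addnA Egs -addnA mulnDl; congr (_ + _); rewrite addnC.
by case: eqP => _; rewrite ?mul1n.
Qed.


(* (3) <-> (E): a product of two minimal generators lies in IJ iff it equals
   some g' mu_i, by comparing degrees. *)
Lemma square_eq_IJ_iff_exchange :
  ideal_eq (powgens S 2) (prodgens S (Jgens n d)) <-> exchange.
Proof.
split=> [E g h gG hG | ex m].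
  have : in_ideal (prodgens S (Jgens n d)) (madd g h).
    rewrite -E; apply/hasP; exists (madd g h); last exact: mdiv_refl.
    by apply: pow2_mem; apply: G_sub.
  case/hasP=> p /allpairsP [[s q] [/= sS /mapP [i _ ->] ->]] dv.
  have [g' g'G dg'] := mingens_below sS.
  exists g', i; split=> //; apply/esym/mdiv_eq.
    by apply: mdiv_trans dv; apply: mdiv_add dg' (mdiv_refl _).
  by rewrite !mdeg_add mdeg_upow (deg_G gG) (deg_G hG) (deg_G g'G).
apply/idP/idP; apply: in_ideal_sub => x.
  move=> /mem_pow2 [s [t [sS tS ->]]].
  have [g gG dg] := mingens_below sS; have [h hG dh] := mingens_below tS.
  have [g' [i [g'G E]]] := ex g h gG hG.
  apply/hasP; exists (madd g' (mu i)).
    by apply: mem_prodgens; [exact: G_sub | exact: mu_in_J].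
  by rewrite -E; apply: mdiv_add.
case/allpairsP=> [[s q] [/= sS /mapP [i _ ->] ->]].
apply/hasP; exists (madd s (mu i)); last exact: mdiv_refl.
by apply: pow2_mem sS _; apply/G_sub/mu_in_G.
Qed.

(* (2) -> (E): the box of g h in G(I^2) is B_(e_i) for some i, and the box
   quotient x = g h / mu_i lies in I_(e_i) = I and has degree d. *)
Lemma very_good_exchange : very_good S -> exchange.
Proof.
move=> [dv [pe [gw Ia]]] g h gG hG.
have Edv i : dv i = d by have := deg_G (pe i); rewrite mdeg_upow.
have ghP : madd g h \in mingens (powgens S 2).
  by apply/mem_mingens_pow2; exists g, h.
have [a [Ha bx]] := gw 2 isT _ ghP.
have [i Ea] := asum1 Ha.
pose x := mdivide_box dv a (madd g h).
have xI : in_ideal (Ia_gens S dv a) x.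
  apply/hasP; exists x; last exact: mdiv_refl.
  by apply/mapP; exists (madd g h) => //; rewrite mem_filter bx Ha.
rewrite Ia in xI; case/hasP: xI => s sS ds.
have Egh : madd g h = madd x (mu i).
  apply/ffunP=> j; move/forallP: bx => /(_ j) /andP [le _].
  rewrite !ffunE; rewrite Ea ffunE Edv in le *.
  move: le; rewrite ffunE.
  by case: (j == i); rewrite ?mul1n ?mul0n ?subn0 ?addn0 // => /subnK.
clearbody x.
have dx : mdeg x = d.
  move: (congr1 (@mdeg n) Egh).
  by rewrite !mdeg_add mdeg_upow (deg_G gG) (deg_G hG); lia.
have xs : s = x by apply: mdiv_eq ds _; rewrite dx deg_S_ge.
by exists x, i; split=> //; rewrite mem_G -xs sS xs dx eqxx.
Qed.

(* Either a = b and the quotient is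
   g, or some a_i > b_i, which forces g = mu_i and the quotient is some mu_k. *)
Lemma box_quotient_in_G g (a b : mono n) :
  g \in G -> asum b = asum a -> in_box (fun _ => d) a (madd g (mupow b)) ->
  mdivide_box (fun _ => d) a (madd g (mupow b)) \in G.
Proof.
move=> gG bs bx.
have bxi j : a j * d <= g j + b j * d <= (a j).+1 * d.
  by move/forallP: bx => /(_ j); rewrite !ffunE.
case: (boolP [exists j, b j < a j]) => [/existsP [i lti] | ].
  have gi : g = mu i.
    apply: G_eq_mu => //; have /andP [le _] := bxi i.
    have : (b i).+1 * d <= a i * d by rewrite leq_mul2r lti orbT.
    by rewrite mulSn; lia.
  pose c : mono n := [ffun j => b j + (j == i)].
  have Ec j : g j + b j * d = c j * d.
    by rewrite gi !ffunE mulnDl addnC; case: eqP; rewrite ?mul1n ?mul0n.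
  have ca j : a j <= c j <= (a j).+1 by have := bxi j; rewrite Ec !leq_pmul2r ?d_gt0.
  pose e : mono n := [ffun j => c j - a j].
  have se : asum e = 1.
    have : asum a + asum e = (asum b).+1.
      rewrite -(@asum_bump _ b c i); last by move=> j; rewrite ffunE.
      rewrite /asum -big_split /=; apply: eq_bigr=> j _; rewrite ffunE.
      by have /andP [/subnKC] := ca j.
    by rewrite bs; lia.
  have [k Ek] := asum1 se.
  suff -> : mdivide_box (fun _ => d) a (madd g (mupow b)) = mu k by apply: mu_in_G.
  apply/ffunP=> j; rewrite !ffunE Ec -mulnBl.
  have := congr1 (fun f : mono n => f j) Ek; rewrite /e !ffunE => ->.
  by case: eqP; rewrite ?mul1n ?mul0n.
rewrite negb_exists => /forallP nb.
have ab : a = b.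
  apply: mdiv_eq; first by apply/mdivP=> j; have := nb j; rewrite -leqNgt.
  by rewrite /mdeg -/(asum a) -/(asum b) bs.
suff -> : mdivide_box (fun _ => d) a (madd g (mupow b)) = g by [].
by apply/ffunP=> j; rewrite !ffunE ab addnK.
Qed.

(* (E) -> (2), with d_i = d: decompose each element of G(I^l) as g mu^b to get
   goodness; I_a is contained in I by the previous lemma, and contains I since
   g mu^a lies in G(I^(|a|+1)) and in the box B_a. *)
Lemma exchange_very_good : exchange -> very_good S.
Proof.
move=> ex; exists (fun _ => d); split; first by move=> i; apply: mu_in_G.
split.
  case=> [//|l] _ m; rewrite mem_mingens_pow => /andP [mP /eqP dm].
  have [g [b [gG bs ->]]] := exchange_decomp ex mP dm.
  exists b; split=> //; apply/forallP=> i; rewrite !ffunE mulSn.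
  by rewrite leq_addl /= leq_add2r G_coord_le.
move=> a m; apply/idP/idP; apply: in_ideal_sub => x.
  case/mapP=> m'; rewrite mem_filter mem_mingens_pow => /andP [bx /andP [m'P /eqP dm]] ->.
  have [g [b [gG bs Em]]] := exchange_decomp ex m'P dm.
  rewrite Em in bx *; have xG := box_quotient_in_G gG bs bx.
  by apply/hasP; exists (mdivide_box (fun _ => d) a (madd g (mupow b))); rewrite ?G_sub ?mdiv_refl.
move=> sS; have [g gG dg] := mingens_below sS.
apply/hasP; exists g => //; apply/mapP; exists (madd g (mupow a)).
  rewrite mem_filter mem_mingens_pow G_mupow_in_pow //=; apply/andP; split.
    apply/forallP=> i; rewrite !ffunE mulSn.
    by rewrite leq_addl /= leq_add2r G_coord_le.
  by rewrite mdeg_add mdeg_mupow deg_G // mulSn.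
by apply/esym/ffunP=> i; rewrite !ffunE addnK.
Qed.

(* The pairs (g, i) indexing the products g mu_i; the pair (mu_j, i) with
   i < j is redundant, since mu_j mu_i = mu_i mu_j is indexed by (mu_i, j). *)
Definition gen_index_pairs : seq (mono n * 'I_n) := [seq (g, i) | g <- G, i <- enum 'I_n].

Definition redundant (p : mono n * 'I_n) : bool :=
  [exists j : 'I_n, (p.1 == mu j) && (p.2 < j)].

Definition mu_shift (p : mono n * 'I_n) : mono n := madd p.1 (mu p.2).

Definition mu_multiples : seq (mono n) :=
  [seq mu_shift p | p <- gen_index_pairs & ~~ redundant p].

Lemma uniq_gen_index_pairs : uniq gen_index_pairs.
Proof.
apply: allpairs_uniq; [exact: undup_uniq | exact: enum_uniq |].
by move=> [x1 y1] [x2 y2] _ _ /= [-> ->].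
Qed.

Lemma mem_gen_index_pairs g (i : 'I_n) : ((g, i) \in gen_index_pairs) = (g \in G).
Proof.
apply/allpairsP/idP=> [[[x y] [/= + _ [-> _]]] //|gG].
by exists (g, i); rewrite mem_enum.
Qed.

(* The redundant pairs correspond to lt_pairs via (j, i) |-> (mu_j, i). *)
Lemma size_redundant : size [seq p <- gen_index_pairs | redundant p] = 'C(n, 2).
Proof.
rewrite -size_lt_pairs -(size_map (fun p => (mu p.1, p.2))).
apply: perm_size; apply: uniq_perm.
- by apply: filter_uniq; apply: uniq_gen_index_pairs.
- rewrite map_inj_in_uniq ?uniq_lt_pairs // => [[x1 y1] [x2 y2] _ _ /= [/mu_inj -> ->]] //.
- move=> [g i]; rewrite mem_filter mem_gen_index_pairs; apply/andP/mapP.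
    case=> /existsP [j /andP [/eqP /= -> lt]] _; exists (j, i) => //.
    by rewrite mem_lt_pairs.
  case=> [[j i'] + [-> ->]]; rewrite mem_lt_pairs => lt; split; last exact: mu_in_G.
  by apply/existsP; exists j; rewrite /= eqxx.
Qed.

Lemma size_mu_multiples : size mu_multiples + 'C(n, 2) = n * size G.
Proof.
rewrite size_map -size_redundant !size_filter addnC count_predC.
by rewrite size_allpairs size_enum_ord mulnC.
Qed.

Lemma mu_shift_coord g h (i j : 'I_n) :
  g \in G -> i != j -> madd g (mu i) = madd h (mu j) -> g = mu j.
Proof.
move=> gG ne /ffunP /(_ j); rewrite !ffunE eqxx eq_sym (negPf ne) addn0 => E.
by apply: G_eq_mu => //; rewrite E leq_addl.
Qed.

Lemma mu_shift_inj : {in [seq p <- gen_index_pairs | ~~ redundant p] &, injective mu_shift}.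
Proof.
move=> [g i] [h j]; rewrite !mem_filter !mem_gen_index_pairs /=.
move=> /andP [nr1 gG] /andP [nr2 hG]; rewrite /mu_shift /= => E.
have [eij|ne] := eqVneq i j.
  subst j; congr (_, _); apply/ffunP=> k; move/ffunP: E => /(_ k); rewrite !ffunE.
  by move/addIn.
have eg := mu_shift_coord gG ne E.
have eh := mu_shift_coord hG (contra_neq esym ne) (esym E).
subst g h; exfalso.
move: nr1 => /existsPn /(_ j); rewrite eqxx /= => n1.
move: nr2 => /existsPn /(_ i); rewrite eqxx /= => n2.
by move: ne; rewrite neq_ltn (negPf n1) (negPf n2).
Qed.

Lemma uniq_mu_multiples : uniq mu_multiples.
Proof.
rewrite map_inj_in_uniq ?filter_uniq ?uniq_gen_index_pairs //; exact: mu_shift_inj.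
Qed.

Lemma mem_mu_multiples x :
  reflect (exists g i, g \in G /\ x = madd g (mu i)) (x \in mu_multiples).
Proof.
apply: (iffP mapP) => [[[g i]] + ->|[g [i [gG ->]]]].
  by rewrite mem_filter mem_gen_index_pairs => /andP [_ gG]; exists g, i.
have [/existsP [j /andP [/eqP /= eg lt]]|nr] := boolP (redundant (g, i)).
  exists (mu i, j); last by rewrite /mu_shift /= eg maddC.
  rewrite mem_filter mem_gen_index_pairs mu_in_G andbT /=; apply/existsPn=> k.
  apply/negP=> /andP [/eqP /mu_inj ek]; subst k.
  by rewrite /= ltnNge ltnW.
by exists (g, i) => //; rewrite mem_filter mem_gen_index_pairs gG andbT.
Qed.

Lemma mu_multiples_sub : {subset mu_multiples <= mingens (powgens S 2)}.
Proof.
move=> x /mem_mu_multiples [g [i [gG ->]]]; apply/mem_mingens_pow2.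
by exists g, (mu i); rewrite mu_in_G.
Qed.

(* (1) <-> (E): as Q is a duplicate-free subset of G(I^2) of size
   n|G| - C(n,2), the Freiman equality holds iff G(I^2) = Q. *)
Lemma freiman_iff_exchange : freiman_mprimary S <-> exchange.
Proof.
have uniqP2 : uniq (mingens (powgens S 2)) by apply: undup_uniq.
rewrite /freiman_mprimary -size_mu_multiples; split=> [F g h gG hG | ex].
  have le : size (mingens (powgens S 2)) <= size mu_multiples by lia.
  have [_ EQ] := uniq_min_size uniq_mu_multiples mu_multiples_sub le.
  have : madd g h \in mu_multiples by rewrite EQ; apply/mem_mingens_pow2; exists g, h.
  by case/mem_mu_multiples => g' [i [g'G E]]; exists g', i.
have sub : {subset mingens (powgens S 2) <= mu_multiples}.
  move=> x /mem_mingens_pow2 [g [h [gG hG ->]]]; have [g' [i [g'G ->]]] := ex g h gG hG.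
  by apply/mem_mu_multiples; exists g', i.
have le := uniq_leq_size uniq_mu_multiples mu_multiples_sub.
by have [-> _] := uniq_min_size uniqP2 sub le.
Qed.

End EquigeneratedPrimary.

Unset Implicit Arguments.

Theorem mainTheorem20 (n : nat) (S : seq (mono n)) (d : nat) :
  0 < n -> mprimary S -> equigen S d ->
  [/\ (freiman_mprimary S <-> very_good S),
      (very_good S <-> ideal_eq (powgens S 2) (prodgens S (Jgens n d)))
    & (ideal_eq (powgens S 2) (prodgens S (Jgens n d)) <-> freiman_mprimary S)].
Proof.
move=> n_gt0 Iprim Ieq.
have F := freiman_iff_exchange n_gt0 Iprim Ieq.
have IJ := square_eq_IJ_iff_exchange n_gt0 Iprim Ieq.
have VG : very_good S <-> exchange S d.
  by split; [exact: very_good_exchange | exact: exchange_very_good].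
by split; tauto.
Qed.
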